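(* Let $P\subseteq\mathbb{R}^d$ be a $d$-dimensional polytope and let $v_1,\dots,v_k$ be Fine core normals of $P$. Let $v=\sum_{i=1}^k\lambda_i v_i\in(\mathbb{Z}^d)^*$ with $\lambda_1,\dots,\lambda_k\ge 0$, $\sum_{i=1}^k\lambda_i\le 1$ and $v\neq 0$. Then $v$ is also a Fine core normal of $P$.
   Context: For a $d$-dimensional rational polytope $P\subseteq\mathbb{R}^d$ and $a\in(\mathbb{Z}^d)^*$ let $h_P(a)=\min_{x\in P}\langle a,x\rangle$. For $s>0$ the Fine adjoint polytope is $P^{F(s)}=\{x\in\mathbb{R}^d : \langle a,x\rangle\ge h_P(a)+s \text{ for all } a\in(\mathbb{Z}^d)^*\setminus\{0\}\}$. The Fine $\mathbb{Q}$-codegree is $\mu^F(P)=(\sup\{s>0 : P^{F(s)}\neq\emptyset\})^{-1}$, the Fine number is $n^F(P)=1/\mu^F(P)$, and the Fine core is $\operatorname{core}^F(P)=P^{F(n^F(P))}$. A Fine core normal of $P$ is a nonzero $a\in(\mathbb{Z}^d)^*$ with $\langle a,y\rangle=h_P(a)+n^F(P)$ for all $y\in\operatorname{core}^F(P)$. *)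

From mathcomp Require Import all_boot all_order all_algebra.
From mathcomp Require Import all_classical all_reals.
Set Implicit Arguments. Unset Strict Implicit. Unset Printing Implicit Defensive.
Import Order.TTheory GRing.Theory Num.Theory.
Local Open Scope ring_scope.
Local Open Scope classical_set_scope.

Section FineDefs.
Variables (R : realType) (d : nat).

Definition pair (a : 'rV[int]_d) (x : 'rV[R]_d) : R :=
  \sum_(i < d) (a ord0 i)%:~R * x ord0 i.

Definition conv_rat (V : seq 'rV[rat]_d) : set 'rV[R]_d :=
  [set x | exists w : 'I_(size V) -> R,
      (forall j, 0 <= w j) /\ \sum_j w j = 1 /\
      x = \sum_j w j *: map_mx ratr (nth 0 V j)].

Definition rational_polytope (P : set 'rV[R]_d) : Prop :=
  exists V : seq 'rV[rat]_d, P = conv_rat V.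

Definition full_dimensional (P : set 'rV[R]_d) : Prop :=
  exists x0 : 'rV[R]_d, exists e : R, 0 < e /\
    forall y : 'rV[R]_d, (forall i, `|y ord0 i - x0 ord0 i| < e) -> P y.

Definition hP (P : set 'rV[R]_d) (a : 'rV[int]_d) : R :=
  inf [set pair a x | x in P].

Definition fine_adjoint (P : set 'rV[R]_d) (s : R) : set 'rV[R]_d :=
  [set x | forall a : 'rV[int]_d, a != 0 -> hP P a + s <= pair a x].

Definition fine_codegree (P : set 'rV[R]_d) : R :=
  (sup [set s | 0 < s /\ fine_adjoint P s !=set0])^-1.

Definition fine_number (P : set 'rV[R]_d) : R := (fine_codegree P)^-1.

Definition fine_core (P : set 'rV[R]_d) : set 'rV[R]_d :=
  fine_adjoint P (fine_number P).

Definition fine_core_normal (P : set 'rV[R]_d) (a : 'rV[int]_d) : Prop :=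
  a != 0 /\ forall y, fine_core P y -> pair a y = hP P a + fine_number P.

End FineDefs.

From mathcomp Require Import all_boot all_order all_algebra.
From mathcomp Require Import all_classical all_reals.
Import Order.TTheory GRing.Theory Num.Theory.
Local Open Scope ring_scope.
Local Open Scope classical_set_scope.

(* The support function a |-> h_P(a) is superlinear on nonnegative combinations,
   so for y in the Fine core and v = sum_i lam_i v_i,
     <v, y> = sum_i lam_i (h_P(v_i) + n) <= h_P(v) + (sum_i lam_i) n <= h_P(v) + n
   (n >= 0: it is a supremum of positive reals, or 0 when that set has no supremum),
   while <v, y> >= h_P(v) + n holds for every nonzero v by definition of the core. *)

Section FineCoreNormals.
Context {R : realType} {d : nat}.
Implicit Types (P : set 'rV[R]_d) (a : 'rV[int]_d) (x : 'rV[R]_d).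

Lemma pair_combination {k : nat} {vs : 'I_k -> 'rV[int]_d} {lam : 'I_k -> R} {a} :
    (forall j, (a ord0 j)%:~R = \sum_(i < k) lam i * (vs i ord0 j)%:~R :> R) ->
  forall x, pair a x = \sum_(i < k) lam i * pair (vs i) x.
Proof.
move=> ha x; rewrite /pair.
under eq_bigr => j _ do rewrite ha mulr_suml.
rewrite exchange_big; apply: eq_bigr => i _; rewrite mulr_sumr.
by apply: eq_bigr => j _; rewrite mulrA.
Qed.

Lemma pair_sum_scale (I : finType) (w : I -> R) (p : I -> 'rV[R]_d) a :
  pair a (\sum_j w j *: p j) = \sum_j w j * pair a (p j).
Proof.
rewrite /pair.
under eq_bigr => i _ do rewrite summxE mulr_sumr.
rewrite exchange_big; apply: eq_bigr => j _; rewrite mulr_sumr.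
by apply: eq_bigr => i _; rewrite mxE mulrCA.
Qed.

Lemma rational_polytope_pair_lbound P a :
  rational_polytope P -> has_lbound [set pair a x | x in P].
Proof.
case=> V ->.
pose c (j : 'I_(size V)) := pair a (map_mx ratr (nth 0 V j) : 'rV[R]_d).
exists (- \sum_j `|c j|) => _ [_ [w [w0 [w1 ->]]] <-].
rewrite pair_sum_scale -[leLHS]mul1r -w1 mulr_suml.
apply: ler_sum => j _; apply: ler_wpM2l => //; apply: lerNnormlW.
by rewrite (bigD1 j) //= lerDl sumr_ge0.
Qed.

Lemma hP_le_pair P a x :
  has_lbound [set pair a x | x in P] -> P x -> hP P a <= pair a x.
Proof. by move=> lbP Px; apply: ge_inf lbP _ _; exists x. Qed.

Lemma hP_combination_le (k : nat) (vs : 'I_k -> 'rV[int]_d) (lam : 'I_k -> R) P a :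
    P !=set0 -> (forall i, has_lbound [set pair (vs i) x | x in P]) ->
    (forall i, 0 <= lam i) ->
    (forall j, (a ord0 j)%:~R = \sum_(i < k) lam i * (vs i ord0 j)%:~R :> R) ->
  \sum_(i < k) lam i * hP P (vs i) <= hP P a.
Proof.
move=> [x0 Px0] lbP lam0 ha; apply: lb_le_inf; first by exists (pair a x0), x0.
move=> _ [x Px <-]; rewrite (pair_combination ha).
by apply: ler_sum => i _; rewrite ler_wpM2l // hP_le_pair.
Qed.

Lemma full_dimensional_neq0 P : full_dimensional P -> P !=set0.
Proof. by case=> x0 [e [e0 Px0e]]; exists x0; apply: Px0e => i; rewrite subrr normr0. Qed.

Lemma fine_number_ge0 P : 0 <= fine_number P.
Proof.
rewrite /fine_number /fine_codegree invrK.
set S := [set s | _].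
have [supS|] := pselect (has_sup S); last by move/sup_out->.
have [[s Ss] _] := supS.
exact: le_trans (ltW Ss.1) (sup_upper_bound supS Ss).
Qed.

End FineCoreNormals.

Theorem mainTheorem3 (R : realType) (d : nat) (P : set 'rV[R]_d)
  (Prat : rational_polytope P) (Pdim : full_dimensional P)
  (k : nat) (vs : 'I_k -> 'rV[int]_d) (lam : 'I_k -> R)
  (hvs : forall i, fine_core_normal P (vs i))
  (hlam0 : forall i, 0 <= lam i) (hlam1 : \sum_(i < k) lam i <= 1)
  (v : 'rV[int]_d)
  (hv : forall j : 'I_d, (v ord0 j)%:~R = \sum_(i < k) lam i * ((vs i) ord0 j)%:~R :> R)
  (hv0 : v != 0) :
  fine_core_normal P v.
Proof.
split=> // y coreP_y; apply/eqP; rewrite eq_le (coreP_y v hv0) andbT.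
have hP_v : \sum_(i < k) lam i * hP P (vs i) <= hP P v.
  apply: hP_combination_le hlam0 hv; first exact: full_dimensional_neq0.
  by move=> i; apply: rational_polytope_pair_lbound.
rewrite (pair_combination hv).
under eq_bigr => i _ do rewrite ((hvs i).2 y coreP_y) mulrDr.
rewrite big_split /= -mulr_suml lerD //.
by rewrite -[leRHS]mul1r ler_wpM2r // fine_number_ge0.
Qed.
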